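(* For every integer $k$ and every integer $n\geq 0$, \[ b_{n}^{(k)}(x)=\sum_{l=0}^{n}\binom{n}{l}\left(\sum_{p=1}^{l+1}\frac{(-1)^{p+l+1}}{p^{k}}\,p!\,\frac{S_{2}(l+1,p)}{l+1}\right)b_{n-l}(x). \]
   Context: For $k\in\mathbb{Z}$, the polylogarithm is $Li_k(x)=\sum_{n=1}^{\infty}\frac{x^n}{n^k}$. The poly-Bernoulli polynomials of the second kind $b_n^{(k)}(x)$ are defined by the generating function \[ \frac{Li_{k}(1-e^{-t})}{\log(1+t)}(1+t)^{x}=\sum_{n=0}^{\infty}b_{n}^{(k)}(x)\frac{t^{n}}{n!}. \] The Bernoulli polynomials of the second kind $b_n(x)$ are defined by $\frac{t}{\log(1+t)}(1+t)^x=\sum_{n=0}^{\infty}b_n(x)\frac{t^n}{n!}$. $S_2(n,l)$ denotes the Stirling numbers of the second kind, defined by $x^n=\sum_{l=0}^{n}S_2(n,l)(x)_l$, where $(x)_l=x(x-1)\cdots(x-l+1)$. *)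

From HB Require Import structures.
From mathcomp Require Import all_boot all_order all_algebra.
Set Implicit Arguments. Unset Strict Implicit. Unset Printing Implicit Defensive.
Import Order.TTheory GRing.Theory Num.Theory.
Local Open Scope ring_scope.

Section FPS.
Variable R : numFieldType.

Definition fps := nat -> R.

Definition fone : fps := fun m => (m == 0%N)%:R.

Definition fmul (f g : fps) : fps :=
  fun n => \sum_(i < n.+1) f i * g (n - i)%N.

Definition fpow (f : fps) (j : nat) : fps := iter j (fmul f) fone.

(* division by t (for a series with zero constant term) *)
Definition fshift (f : fps) : fps := fun n => f n.+1.

(* inverse of a series with constant term 1: 1/f = sum_j (1 - f)^j,
   coefficient n only receives contributions from j <= n *)
Definition finv1 (f : fps) : fps :=
  fun n => \sum_(j < n.+1) fpow (fun m => fone m - f m) j n.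

Definition one_minus_exp_neg : fps :=
  fun m => if m is 0%N then 0 else (-1) ^+ m.+1 / (m`!)%:R.

Definition log1p : fps :=
  fun m => if m is 0%N then 0 else (-1) ^+ m.+1 / m%:R.

(* (1+t)^x = sum_m binom(x, m) t^m *)
Definition binom_series (x : R) : fps :=
  fun m => (\prod_(i < m) (x - i%:R)) / (m`!)%:R.

(* Li_k(1 - e^{-t}) = sum_{j>=1} (1-e^{-t})^j / j^k ; (1-e^{-t})^j has order j *)
Definition Li_comp (k : int) : fps :=
  fun m => \sum_(1 <= j < m.+1) fpow one_minus_exp_neg j m / ((j%:R : R) ^ k).

Definition t_over_log1p : fps := finv1 (fshift log1p).

(* Bernoulli polynomials of the second kind:
   t/log(1+t) (1+t)^x = sum_n b_n(x) t^n/n! *)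
Definition bern2 (n : nat) (x : R) : R :=
  (n`!)%:R * fmul t_over_log1p (binom_series x) n.

(* poly-Bernoulli polynomials of the second kind:
   Li_k(1-e^{-t})/log(1+t) (1+t)^x = sum_n b_n^(k)(x) t^n/n!,
   computed as (Li_k(1-e^{-t})/t) * (t/log(1+t)) * (1+t)^x *)
Definition polybern2 (k : int) (n : nat) (x : R) : R :=
  (n`!)%:R * fmul (fmul (fshift (Li_comp k)) t_over_log1p) (binom_series x) n.

End FPS.

Fixpoint stirling2 (n l : nat) : nat :=
  match n, l with
  | 0, 0 => 1
  | 0, _.+1 => 0
  | _.+1, 0 => 0
  | n'.+1, l'.+1 => stirling2 n' l' + l'.+1 * stirling2 n' l'.+1
  end%N.

(* Writing E := 1 - e^{-t}, the series Li_k(E)/log(1+t) (1+t)^x factors as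
   (Li_k(E)/t) * (t/log(1+t)) * (1+t)^x, and the last two factors generate
   the b_n(x).  So the theorem is a binomial convolution once the coefficients
   of Li_k(E)/t are known, i.e. once [t^m] E^p = (-1)^(p+m) p! S2(m,p) / m!.
   That formula follows from the differential equation E' = 1 - E: it gives
   (E^(p+1))' = (p+1) (E^p - E^(p+1)), which on coefficients is exactly the
   recurrence of the Stirling numbers of the second kind. *)
From HB Require Import structures.
From mathcomp Require Import all_boot all_order all_algebra.
From mathcomp Require Import ring.
Set Implicit Arguments. Unset Strict Implicit. Unset Printing Implicit Defensive.
Import Order.TTheory GRing.Theory Num.Theory.
Local Open Scope ring_scope.

Section FormalPowerSeries.
Variable R : numFieldType.
Implicit Types f g h : fps R.

Definition ftrunc (n : nat) f : {poly R} := \poly_(i < n.+1) f i.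

Definition fderiv f : fps R := fun m => f m.+1 *+ m.+1.

Lemma coef_ftrunc n f j : (j <= n)%N -> (ftrunc n f)`_j = f j.
Proof. by move=> hj; rewrite coef_poly ltnS hj. Qed.

Lemma coefM_fmul f g (p q : {poly R}) n :
  (forall j, (j <= n)%N -> p`_j = f j) -> (forall j, (j <= n)%N -> q`_j = g j) ->
  (p * q)`_n = fmul f g n.
Proof.
move=> Hp Hq; rewrite coefM /fmul; apply: eq_bigr => i _.
by rewrite Hp ?Hq // ?leq_subr // -ltnS.
Qed.

Lemma coefM_ftrunc n f g j :
  (j <= n)%N -> (ftrunc n f * ftrunc n g)`_j = fmul f g j.
Proof.
by move=> hj; apply: coefM_fmul => i hi; apply: coef_ftrunc; apply: leq_trans hj.
Qed.

Lemma fmulA f g h n : fmul (fmul f g) h n = fmul f (fmul g h) n.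
Proof.
rewrite -(@coefM_fmul _ _ (ftrunc n f * ftrunc n g) (ftrunc n h));
  last exact: coef_ftrunc; last by move=> j hj; rewrite coefM_ftrunc.
rewrite -mulrA; apply: coefM_fmul; first exact: coef_ftrunc.
by move=> j hj; rewrite coefM_ftrunc.
Qed.

Lemma fmulC f g n : fmul f g n = fmul g f n.
Proof. by rewrite -!(coefM_ftrunc _ _ (leqnn n)) mulrC. Qed.

Lemma eq_fmull f f' g n : (forall i, f i = f' i) -> fmul f g n = fmul f' g n.
Proof. by move=> H; apply: eq_bigr => i _; rewrite H. Qed.

Lemma eq_fmulr f g g' n : (forall i, g i = g' i) -> fmul f g n = fmul f g' n.
Proof. by move=> H; apply: eq_bigr => i _; rewrite H. Qed.

Lemma fmulBl f g h n : fmul (fun m => f m - g m) h n = fmul f h n - fmul g h n.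
Proof. by rewrite /fmul -sumrB; apply: eq_bigr => i _; rewrite mulrBl. Qed.

Lemma fmulZr f g c n : fmul f (fun m => c * g m) n = c * fmul f g n.
Proof. by rewrite /fmul mulr_sumr; apply: eq_bigr => i _; rewrite mulrCA. Qed.

Lemma fmul1l g n : fmul (fone R) g n = g n.
Proof.
rewrite /fmul big_ord_recl /= big1 ?addr0 ?mul1r ?subn0 // => i _.
by rewrite /fone /= mul0r.
Qed.

Lemma fmul0r f g n : (forall i, g i = 0) -> fmul f g n = 0.
Proof. by move=> H; rewrite /fmul big1 // => i _; rewrite H mulr0. Qed.

Lemma fderiv_fone m : fderiv (fone R) m = 0.
Proof. by rewrite /fderiv /fone mulr0n mul0rn. Qed.

Lemma fderivM f g n :
  fderiv (fmul f g) n = fmul (fderiv f) g n + fmul f (fderiv g) n.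
Proof.
rewrite /fderiv -(@coefM_fmul f g (ftrunc n.+1 f) (ftrunc n.+1 g) n.+1);
  try exact: coef_ftrunc.
rewrite -coef_deriv derivM coefD; congr (_ + _); apply: coefM_fmul => j hj;
  rewrite ?coef_deriv coef_ftrunc //; exact: leq_trans hj (leqnSn _).
Qed.

Lemma fderiv_fpowS f j n :
  fderiv (fpow f j.+1) n = j.+1%:R * fmul (fderiv f) (fpow f j) n.
Proof.
elim: j n => [|j IH] n.
  by rewrite fderivM (@fmul0r _ (fderiv _)) ?addr0 ?mul1r //; apply: fderiv_fone.
rewrite [fpow _ _]/= fderivM (eq_fmulr _ _ IH) fmulZr.
have -> : fmul f (fmul (fderiv f) (fpow f j)) n = fmul (fderiv f) (fpow f j.+1) n.
  by rewrite -fmulA (eq_fmull _ _ (fmulC f (fderiv f))) fmulA.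
by rewrite -[in RHS]addn1 natrD mulrDl mul1r addrC.
Qed.

End FormalPowerSeries.

Section OneMinusExpNeg.
Variable R : numFieldType.

Local Notation E := (@one_minus_exp_neg R).

Lemma fact_neq0 m : ((m`!)%:R : R) != 0.
Proof. by rewrite pnatr_eq0 -lt0n fact_gt0. Qed.

Lemma natS_neq0 m : ((m.+1)%:R : R) != 0.
Proof. by rewrite pnatr_eq0. Qed.

Lemma fderiv_one_minus_exp_neg m : fderiv E m = fone R m - E m.
Proof.
rewrite /fderiv /one_minus_exp_neg /fone factS natrM -[(_ / _) *+ _]mulr_natr.
have h1 := fact_neq0 m; have h2 := natS_neq0 m.
case: m h1 h2 => [|m] h1 h2 /=.
  by rewrite subr0 !expr2 /= fact0; field.
rewrite sub0r !exprS.
move: (m.+2)%:R h2 ((m.+1)`!)%:R h1 => b hb c hc; field; by rewrite hb hc.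
Qed.

Lemma fderiv_fpowS_one_minus_exp_neg j m :
  fderiv (fpow E j.+1) m = j.+1%:R * (fpow E j m - fpow E j.+1 m).
Proof.
rewrite fderiv_fpowS (eq_fmull _ _ fderiv_one_minus_exp_neg) fmulBl fmul1l.
by rewrite [fpow E j.+1]/=.
Qed.

Definition stirling2_coef (j m : nat) : R :=
  (-1) ^+ (j + m) * (j`!)%:R * (stirling2 m j)%:R / (m`!)%:R.

Lemma coef_fpow_one_minus_exp_neg j m : fpow E j m = stirling2_coef j m.
Proof.
elim: j m => [|j IH] m.
  rewrite /fone /stirling2_coef /=; case: m => [|m] /=.
    by rewrite expr0 !mul1r invr1.
  by rewrite !mulr0 mul0r.
elim: m => [|m IHm].
  rewrite /= /fmul big_ord_recl big_ord0 /one_minus_exp_neg /stirling2_coef /=.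
  by rewrite mul0r addr0 !mulr0 mul0r.
(* the (m+1)-th coefficient is read off from the m-th one of the derivative *)
have := fderiv_fpowS_one_minus_exp_neg j m.
rewrite /fderiv IH IHm -[(fpow _ _ _) *+ _]mulr_natr => Hrec.
have -> : fpow E j.+1 m.+1 =
    j.+1%:R * (stirling2_coef j m - stirling2_coef j.+1 m) / m.+1%:R.
  by rewrite -Hrec mulfK ?natS_neq0.
rewrite /stirling2_coef /= factS natrM natrD natrM !factS !natrM.
rewrite !addSn !addnS !exprS.
have h1 := fact_neq0 m; have h2 := natS_neq0 m.
field; by rewrite h1 /= addrC natr1.
Qed.

Lemma coef_Li_comp_shift (k : int) l :
  (l`!)%:R * fshift (Li_comp R k) l =
  \sum_(1 <= p < l.+2)
     (-1) ^+ (p + l + 1) / ((p%:R : R) ^ k) * (p`!)%:R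
       * (stirling2 l.+1 p)%:R / (l.+1)%:R.
Proof.
rewrite /fshift /Li_comp mulr_sumr; apply: eq_big_nat => p /andP[hp _].
have hpk : (p%:R : R) ^ k != 0 by apply: expfz_neq0; rewrite pnatr_eq0 -lt0n.
rewrite coef_fpow_one_minus_exp_neg /stirling2_coef factS natrM addn1 addnS.
have ha := fact_neq0 l; have hb := natS_neq0 l.
move: (p%:R ^ k) (p`!%:R) ((stirling2 l.+1 p)%:R) ((-1) ^+ (p + l).+1) hpk.
move: (l`!%:R) (l.+1%:R) ha hb => a b ha hb c d e s hc.
by field; rewrite hc ha hb.
Qed.

End OneMinusExpNeg.

Theorem theorem2 (R : numFieldType) (k : int) (n : nat) (x : R) :
  polybern2 k n x =
  \sum_(l < n.+1)
     ('C(n, l))%:R *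
     (\sum_(1 <= p < l.+2)
         (-1) ^+ (p + l + 1) / ((p%:R : R) ^ k) * (p`!)%:R
           * (stirling2 l.+1 p)%:R / (l.+1)%:R)
     * bern2 (n - l) x.
Proof.
rewrite /polybern2 fmulA /fmul mulr_sumr; apply: eq_bigr => [[l hl]] _ /=.
rewrite -coef_Li_comp_shift /bern2.
have fact_n : (n`!)%:R = ('C(n, l))%:R * ((l`!)%:R * ((n - l)`!)%:R) :> R.
  by rewrite -!natrM bin_fact // -ltnS.
rewrite fact_n /fmul; ring.
Qed.
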